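(* For every PTM $M$, the probabilistic function $PTC_M:\mathbb{N}\times\mathbb{N}\to\mathcal D(\mathbb{N})$ defined by $PTC_M(x,y)(0)=PT^0_M(x,y)$, $PTC_M(x,y)(1)=PT^1_M(x,y)$ and $PTC_M(x,y)(z)=0$ for $z\ge2$ belongs to $\mathscr{PR}$.
   Context: PTM: Turing machine with two transition functions $\delta_0,\delta_1$ (each applied with probability $1/2$) defined on non-final configurations; initial configuration on input string $w=a\cdot v$ is $\langle\varepsilon,a,v,q_s\rangle$; final configurations are $\langle s,a,\varepsilon,q\rangle$ with $q$ final. $n\mapsto\overline n$ is the length-lexicographic bijection $\mathbb{N}\to\{0,1\}^*$ ($\overline0=\varepsilon,\overline1=0,\overline2=1,\overline3=00,\dots$). Computation tree $CT_M(x)$: nodes are binary strings, root $\varepsilon$ labelled by the initial configuration on $\overline x$, a node $b$ labelled by a non-final $C$ has children $b0,b1$ labelled $\delta_0(C),\delta_1(C)$, nodes labelled by final configurations have no children; $y\in\mathbb{N}$ denotes node $\overline y$, a leaf if it is in the tree with final label. $PT_M(x,y)=2^{-|\overline y|}$. Recursively in $y$: if $y$ is not a leaf of $CT_M(x)$, $PT^1_M(x,y)=1$, $PT^0_M(x,y)=0$; otherwise $PT^0_M(x,y)=PT_M(x,y)/\prod_{k<y}PT^1_M(x,k)$ and $PT^1_M(x,y)=1-PT^0_M(x,y)$. $\mathcal D(X)$: functions $X\to[0,1]$ with sum $\le1$; PF: function $\mathbb{N}^k\to\mathcal D(\mathbb{N})$. Basic PFs: $z(n)(0)=1$; $s(n)(n+1)=1$;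 $\Pi^n_m(k_1,\dots,k_n)(k_m)=1$; $r(x)(x)=r(x)(x+1)=1/2$ (other values $0$). Generalized composition $(f\odot(g_1,\dots,g_n))(\vec x)(y)=\sum_{z_1,\dots,z_n} f(z_1,\dots,z_n)(y)\prod_i g_i(\vec x)(z_i)$; primitive recursion $h(\vec x,0)=f(\vec x)$, $h(\vec x,y+1)(w)=\sum_z h(\vec x,y)(z)\, g(\vec x,y,z)(w)$; minimization $\mu f(\vec x)(y)=f(\vec x,y)(0)\prod_{z<y}\sum_{k>0}f(\vec x,z)(k)$. $\mathscr{PR}$ is the smallest class of PFs containing the basic PFs and closed under these operations. *)

From Stdlib Require Import Reals List PArith.
Import ListNotations.
Open Scope R_scope.

(* Length-lexicographic bijection  n |-> nbar n : nat -> {0,1}^*       *)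
(* nbar n = binary expansion of n+1 with its leading 1 removed;        *)
(* false = bit 0, true = bit 1.  nbar 0 = [], nbar 1 = [0], nbar 2 = [1],*)
(* nbar 3 = [0;0], ...                                                 *)
Fixpoint pos_bits (p : positive) : list bool :=
  match p with
  | xH => []
  | xO p' => pos_bits p' ++ [false]
  | xI p' => pos_bits p' ++ [true]
  end.

Definition nbar (n : nat) : list bool := pos_bits (Pos.of_succ_nat n).

Inductive Dir := DLeft | DStay | DRight.

Record PTM := mkPTM {
  Q : Type;
  Gam : Type;
  Q_finite : exists l : list Q, forall q, In q l;
  Gam_finite : exists l : list Gam, forall a, In a l;
  blank : Gam;
  sym0 : Gam;
  sym1 : Gam;
  sym01 : sym0 <> sym1;
  sym0b : sym0 <> blank;
  sym1b : sym1 <> blank;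
  qstart : Q;
  qfinal : Q -> bool;
  delta : bool -> Q -> Gam -> Q * Gam * Dir   (* delta false = delta_0, delta true = delta_1 *)
}.

(* Configuration <s, a, v, q>: the tape reads s . a . v with the head on a.
   The left part s is stored REVERSED (head of the list = cell just left of the head). *)
Record config (Qt Gt : Type) := mkConf {
  cleft : list Gt; ccur : Gt; cright : list Gt; cstate : Qt }.
Arguments mkConf {Qt Gt}.
Arguments cleft {Qt Gt}.
Arguments ccur {Qt Gt}.
Arguments cright {Qt Gt}.
Arguments cstate {Qt Gt}.

Definition Conf (M : PTM) := config (Q M) (Gam M).

Definition step (M : PTM) (i : bool) (C : Conf M) : Conf M :=
  match delta M i (cstate C) (ccur C) with
  | (q', a', d) =>
    match d with
    | DStay => mkConf (cleft C) a' (cright C) q'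
    | DLeft =>
        match cleft C with
        | [] => mkConf [] (blank M) (a' :: cright C) q'
        | c :: s' => mkConf s' c (a' :: cright C) q'
        end
    | DRight =>
        match cright C with
        | [] => mkConf (a' :: cleft C) (blank M) [] q'
        | c :: v' => mkConf (a' :: cleft C) c v' q'
        end
    end
  end.

Definition is_final (M : PTM) (C : Conf M) : bool :=
  match cright C with
  | [] => qfinal M (cstate C)
  | _ :: _ => false
  end.

Definition init (M : PTM) (x : nat) : Conf M :=
  match map (fun b : bool => if b then sym1 M else sym0 M) (nbar x) with
  | [] => mkConf [] (blank M) [] (qstart M)
  | a :: v => mkConf [] a v (qstart M)
  end.

(* Label of the node bs of the computation tree rooted at C:
   Some C' if bs is a node of the tree labelled C', None if bs is not in the tree. *)
Fixpoint follow (M : PTM) (C : Conf M) (bs : list bool) : option (Conf M) :=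
  match bs with
  | [] => Some C
  | i :: bs' => if is_final M C then None else follow M (step M i C) bs'
  end.

Definition is_leaf (M : PTM) (x y : nat) : bool :=
  match follow M (init M x) (nbar y) with
  | Some C => is_final M C
  | None => false
  end.

Definition PT (M : PTM) (x y : nat) : R := (/ 2) ^ length (nbar y).

Fixpoint prodPT1 (M : PTM) (x n : nat) : R :=
  match n with
  | O => 1
  | S k => prodPT1 M x k *
           (if is_leaf M x k then 1 - PT M x k / prodPT1 M x k else 1)
  end.

Definition PT0 (M : PTM) (x y : nat) : R :=
  if is_leaf M x y then PT M x y / prodPT1 M x y else 0.

Definition PT1 (M : PTM) (x y : nat) : R :=
  if is_leaf M x y then 1 - PT0 M x y else 1.

Definition PTC (M : PTM) (x y z : nat) : R :=
  match z with
  | O => PT0 M x y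
  | 1%nat => PT1 M x y
  | _ => 0
  end.

(* A PF of arity k is represented by  f : list nat -> nat -> R,  only  *)
(* its values on argument lists of length k being relevant.            *)
Definition PF := list nat -> nat -> R.

Fixpoint fsum (K : nat) (f : nat -> R) : R :=
  match K with O => 0 | S K' => fsum K' f + f K' end.

Fixpoint fprod (n : nat) (s : nat -> R) : R :=
  match n with O => 1 | S n' => fprod n' s * s n' end.

Fixpoint box (n K : nat) (a : list nat -> R) : R :=
  match n with
  | O => a []
  | S n' => fsum K (fun i => box n' K (fun zs => a (i :: zs)))
  end.

(* sum over N^n (terms are nonnegative in all uses) *)
Definition has_sum_n (n : nat) (a : list nat -> R) (l : R) : Prop :=
  Un_cv (fun K => box n K a) l.

Fixpoint prodg (gs : list PF) (xs : list nat) (zs : list nat) : R :=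
  match gs, zs with
  | g :: gs', z :: zs' => g xs z * prodg gs' xs zs'
  | _, _ => 1
  end.

Inductive PR : nat -> PF -> Prop :=
| PR_zero (h : PF) :
    (forall n y, h [n] y = if Nat.eqb y 0 then 1 else 0) -> PR 1 h
| PR_succ (h : PF) :
    (forall n y, h [n] y = if Nat.eqb y (S n) then 1 else 0) -> PR 1 h
| PR_proj (n m : nat) (h : PF) :
    (1 <= m <= n)%nat ->
    (forall xs y, length xs = n ->
       h xs y = if Nat.eqb y (nth (m - 1) xs 0%nat) then 1 else 0) -> PR n h
| PR_rand (h : PF) :
    (forall x y, h [x] y =
       if Nat.eqb y x then / 2 else if Nat.eqb y (S x) then / 2 else 0) -> PR 1 h
| PR_comp (k n : nat) (f : PF) (gs : list PF) (h : PF) :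
    (1 <= n)%nat ->
    PR n f -> length gs = n -> (forall g, In g gs -> PR k g) ->
    (forall xs y, length xs = k ->
       has_sum_n n (fun zs => f zs y * prodg gs xs zs) (h xs y)) ->
    PR k h
| PR_rec (k : nat) (f g h : PF) :
    PR k f -> PR (S (S k)) g ->
    (forall xs w, length xs = k -> h (xs ++ [0%nat]) w = f xs w) ->
    (forall xs y w, length xs = k ->
       infinite_sum (fun z => h (xs ++ [y]) z * g (xs ++ [y; z]) w)
                    (h (xs ++ [S y]) w)) ->
    PR (S k) h
| PR_min (k : nat) (f h : PF) :
    PR (S k) f ->
    (forall xs, length xs = k ->
       exists s : nat -> R,
         (forall z, infinite_sum (fun j => f (xs ++ [z]) (S j)) (s z)) /\
         (forall y, h xs y = f (xs ++ [y]) 0%nat * fprod y s)) ->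
    PR k h.

(* Ordinary primitive recursive functions embed into PR as point masses, and
   arithmetizing configurations of M by Cantor pairing shows that "node y of
   CT_M(x) is a leaf" is primitive recursive, as is the integer B(x,y) with
   prod_{k<y} PT^1_M(x,k) = B(x,y) / 2^|nbar y|.  Hence PT^1_M(x,y) is
   (B-1)/B at a leaf and 1 elsewhere, and its binary digits d_i(x,y) are
   primitive recursive by long division.  Finally
     PTC_M(x,y) = sum_i 2^-(i+1) [point mass at d_i(x,y)],
   the composition of d with the geometric distribution i |-> 2^-(i+1), which
   is the minimization of a fair coin. *)

From Stdlib Require Import Reals List Lia Arith PArith Lra ClassicalEpsilon.
Import ListNotations.
Open Scope R_scope.

Definition dirac (v y : nat) : R := if Nat.eqb y v then 1 else 0.

Lemma dirac_eq v : dirac v v = 1.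
Proof. unfold dirac. now rewrite Nat.eqb_refl. Qed.

Lemma dirac_neq v y : y <> v -> dirac v y = 0.
Proof. intros H. unfold dirac. now destruct (Nat.eqb_spec y v). Qed.

Lemma fsum_ext n f g : (forall i, (i < n)%nat -> f i = g i) -> fsum n f = fsum n g.
Proof. induction n; simpl; intros H; auto. rewrite IHn, H; auto. Qed.

Lemma fsum_zero K f : (forall i, f i = 0) -> fsum K f = 0.
Proof. intros H. induction K; simpl; auto. rewrite IHK, H. ring. Qed.

Lemma fsum_single K f v : (forall i, i <> v -> f i = 0) ->
  fsum K f = if Nat.ltb v K then f v else 0.
Proof.
  intros H. induction K as [|K IH]; simpl; [reflexivity|]. rewrite IH.
  destruct (Nat.eq_dec K v) as [<-|NE].
  - rewrite Nat.ltb_irrefl, (proj2 (Nat.ltb_lt K (S K))) by lia. ring.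
  - rewrite (H K NE). destruct (Nat.ltb_spec v K), (Nat.ltb_spec v (S K)); try lia; ring.
Qed.

Lemma box_single n K (a : list nat -> R) vs : length vs = n ->
  (forall zs, length zs = n -> zs <> vs -> a zs = 0) ->
  box n K a = if forallb (fun v => Nat.ltb v K) vs then a vs else 0.
Proof.
  revert a vs. induction n as [|n IH]; intros a vs Hl Ha.
  - now destruct vs.
  - destruct vs as [|v vs]; [discriminate|]. injection Hl as Hl. simpl.
    assert (E : forall i, box n K (fun zs => a (i :: zs)) =
      if forallb (fun v => Nat.ltb v K) vs then a (i :: vs) else 0).
    { intros i. apply (IH (fun zs => a (i :: zs))); auto.
      intros zs Hz Hne. apply Ha; [simpl; lia|congruence]. }
    rewrite (fsum_single K _ v).
    + rewrite E. now destruct (Nat.ltb v K), (forallb _ vs).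
    + intros i Hi. rewrite E. destruct (forallb _ vs); auto.
      apply Ha; [simpl; lia|congruence].
Qed.

Lemma forallb_lt_list_sum K vs :
  (list_sum vs < K)%nat -> forallb (fun v => Nat.ltb v K) vs = true.
Proof.
  induction vs as [|v vs IH]; simpl; intros; auto.
  rewrite (proj2 (Nat.ltb_lt v K)) by lia. apply IH. lia.
Qed.

Lemma Un_cv_stationary (u : nat -> R) l N :
  (forall n, (n >= N)%nat -> u n = l) -> Un_cv u l.
Proof.
  intros H eps He. exists N. intros n Hn. rewrite H by auto.
  unfold Rdist. now rewrite Rminus_diag, Rabs_R0.
Qed.

Lemma Un_cv_eventually_eq (u v : nat -> R) l N :
  Un_cv u l -> (forall n, (n >= N)%nat -> v n = u n) -> Un_cv v l.
Proof.
  intros H E eps He. destruct (H eps He) as [N1 HN]. exists (max N N1).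
  intros n Hn. rewrite E by lia. apply HN. lia.
Qed.

Lemma infinite_sum_single f v : (forall i, i <> v -> f i = 0) -> infinite_sum f (f v).
Proof.
  intros H eps He. exists v. intros n Hn.
  assert (E : sum_f_R0 f n = f v).
  { induction Hn as [|n Hn IH]; simpl.
    - destruct v as [|v]; simpl; auto. rewrite sum_eq_R0; [ring|].
      intros i Hi. apply H. lia.
    - rewrite IH, (H (S n)) by lia. ring. }
  unfold Rdist. now rewrite E, Rminus_diag, Rabs_R0.
Qed.

(** * Deterministic primitive recursive functions *)

Definition dpr_by (k : nat) (h : PF) (F : list nat -> nat) : Prop :=
  PR k h /\ forall xs y, length xs = k -> h xs y = dirac (F xs) y.

Definition DPR (k : nat) (F : list nat -> nat) : Prop := exists h, dpr_by k h F.

Lemma DPR_ext k F G :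
  (forall xs, length xs = k -> F xs = G xs) -> DPR k F -> DPR k G.
Proof.
  intros E [h [Hh Hv]]. exists h; split; auto.
  intros xs y L. rewrite Hv, E; auto.
Qed.

Lemma DPR_proj k m : (m < k)%nat -> DPR k (fun xs => nth m xs 0%nat).
Proof.
  intros H. exists (fun xs => dirac (nth m xs 0%nat)). split; auto.
  apply (PR_proj k (S m)); [lia|]. intros xs y _. now rewrite Nat.sub_1_r.
Qed.

Definition DPR1 (f : nat -> nat) : Prop := DPR 1 (fun l => f (nth 0 l 0%nat)).
Definition DPR2 (f : nat -> nat -> nat) : Prop :=
  DPR 2 (fun l => f (nth 0 l 0%nat) (nth 1 l 0%nat)).
Definition DPR3 (f : nat -> nat -> nat -> nat) : Prop :=
  DPR 3 (fun l => f (nth 0 l 0%nat) (nth 1 l 0%nat) (nth 2 l 0%nat)).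
Definition DPR4 (f : nat -> nat -> nat -> nat -> nat) : Prop :=
  DPR 4 (fun l => f (nth 0 l 0%nat) (nth 1 l 0%nat) (nth 2 l 0%nat) (nth 3 l 0%nat)).

Lemma DPR1_zero : DPR1 (fun _ => 0%nat).
Proof. exists (fun _ => dirac 0). split; auto. now apply PR_zero. Qed.

Lemma DPR1_S : DPR1 S.
Proof.
  exists (fun xs => dirac (S (nth 0 xs 0%nat))). split; auto. now apply PR_succ.
Qed.

Lemma DPR_choose k gs : Forall (DPR k) gs -> exists hs, Forall2 (dpr_by k) hs gs.
Proof.
  induction 1 as [|g gs [h Hh] _ [hs Hs]]; [exists []|exists (h :: hs)]; auto.
Qed.

Lemma dpr_by_PR k hs gs : Forall2 (dpr_by k) hs gs -> forall h, In h hs -> PR k h.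
Proof.
  induction 1 as [|h g hs gs [Hh _] _ IH]; simpl; [tauto|].
  intros h' [<-|Hin]; auto.
Qed.

Lemma prodg_dirac k hs gs xs zs : length xs = k -> Forall2 (dpr_by k) hs gs ->
  length zs = length gs ->
  prodg hs xs zs = if list_eq_dec Nat.eq_dec zs (map (fun g => g xs) gs) then 1 else 0.
Proof.
  intros Lx HF. revert zs.
  induction HF as [|h g hs gs [_ Hh] HF IH]; intros [|z zs] Lz; try discriminate.
  - reflexivity.
  - injection Lz as Lz. cbn [prodg map]. rewrite Hh, IH by auto.
    destruct (list_eq_dec Nat.eq_dec zs (map (fun g => g xs) gs)),
      (list_eq_dec Nat.eq_dec (z :: zs) (g xs :: map (fun g => g xs) gs)),
      (Nat.eq_dec z (g xs));
      subst; rewrite ?dirac_eq, ?dirac_neq by auto; try ring; congruence.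
Qed.

Lemma DPR_comp k n F gs : (1 <= n)%nat -> DPR n F -> length gs = n ->
  Forall (DPR k) gs -> DPR k (fun xs => F (map (fun g => g xs) gs)).
Proof.
  intros Hn [f [Hf Hfv]] Hl HF. destruct (DPR_choose k gs HF) as [hs Hs].
  exists (fun xs => dirac (F (map (fun g => g xs) gs))). split; [|auto].
  apply (PR_comp k n f hs); auto.
  - now rewrite (Forall2_length Hs).
  - exact (dpr_by_PR k hs gs Hs).
  - intros xs y Lx. set (vs := map (fun g => g xs) gs).
    assert (Lvs : length vs = n) by (unfold vs; now rewrite length_map).
    apply (Un_cv_stationary _ _ (S (list_sum vs))). intros K HK.
    rewrite (box_single n K _ vs Lvs).
    + rewrite forallb_lt_list_sum by lia.
      rewrite (prodg_dirac k hs gs xs vs), Hfv by (auto; congruence).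
      destruct (list_eq_dec _ _ _) as [_|NE]; [ring|now elim NE].
    + intros zs Hz Hne. rewrite (prodg_dirac k hs gs xs zs) by (auto; lia).
      destruct (list_eq_dec _ _ _) as [E|_]; [now elim Hne|ring].
Qed.

Fixpoint prec (F G : list nat -> nat) (xs : list nat) (y : nat) : nat :=
  match y with O => F xs | S y' => G (xs ++ [y'; prec F G xs y']) end.

Lemma firstn_app_length (xs l : list nat) : firstn (length xs) (xs ++ l) = xs.
Proof. now rewrite firstn_app, Nat.sub_diag, firstn_all, app_nil_r. Qed.

Lemma nth_app_length (xs : list nat) y : nth (length xs) (xs ++ [y]) 0%nat = y.
Proof. rewrite app_nth2, Nat.sub_diag; auto. Qed.

Lemma DPR_rec k F G : DPR k F -> DPR (S (S k)) G ->
  DPR (S k) (fun l => prec F G (firstn k l) (nth k l 0%nat)).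
Proof.
  intros [f [Hf Hfv]] [g [Hg Hgv]].
  exists (fun l => dirac (prec F G (firstn k l) (nth k l 0%nat))). split; [|auto].
  apply (PR_rec k f g); auto; intros xs; intros; subst k;
    rewrite ?firstn_app_length, ?nth_app_length.
  - now rewrite Hfv.
  - set (v := prec F G xs y).
    replace (dirac (prec F G xs (S y)) w) with (dirac v v * g (xs ++ [y; v]) w).
    + apply (infinite_sum_single (fun z => dirac v z * g (xs ++ [y; z]) w)).
      intros i Hi. rewrite dirac_neq by auto. ring.
    + rewrite dirac_eq, Hgv by (rewrite length_app; simpl; lia). apply Rmult_1_l.
Qed.

Lemma DPR_comp1 k f g : DPR1 f -> DPR k g -> DPR k (fun xs => f (g xs)).
Proof. intros Hf Hg. apply (DPR_comp k 1 _ [g]) in Hf; auto. Qed.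

Lemma DPR_comp2 k f g1 g2 : DPR2 f -> DPR k g1 -> DPR k g2 ->
  DPR k (fun xs => f (g1 xs) (g2 xs)).
Proof. intros Hf H1 H2. apply (DPR_comp k 2 _ [g1; g2]) in Hf; auto. Qed.

Lemma DPR_comp3 k f g1 g2 g3 : DPR3 f -> DPR k g1 -> DPR k g2 -> DPR k g3 ->
  DPR k (fun xs => f (g1 xs) (g2 xs) (g3 xs)).
Proof. intros Hf H1 H2 H3. apply (DPR_comp k 3 _ [g1; g2; g3]) in Hf; auto. Qed.

Lemma DPR_comp4 k f g1 g2 g3 g4 : DPR4 f -> DPR k g1 -> DPR k g2 -> DPR k g3 ->
  DPR k g4 -> DPR k (fun xs => f (g1 xs) (g2 xs) (g3 xs) (g4 xs)).
Proof. intros Hf H1 H2 H3 H4. apply (DPR_comp k 4 _ [g1; g2; g3; g4]) in Hf; auto. Qed.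

Lemma DPR_nth0 k : DPR (S k) (fun xs => nth 0 xs 0%nat).
Proof. apply DPR_proj; lia. Qed.
Lemma DPR_nth1 k : DPR (S (S k)) (fun xs => nth 1 xs 0%nat).
Proof. apply DPR_proj; lia. Qed.
Lemma DPR_nth2 k : DPR (S (S (S k))) (fun xs => nth 2 xs 0%nat).
Proof. apply DPR_proj; lia. Qed.
Lemma DPR_nth3 k : DPR (S (S (S (S k)))) (fun xs => nth 3 xs 0%nat).
Proof. apply DPR_proj; lia. Qed.

Lemma DPR_const k c : DPR (S k) (fun _ => c).
Proof.
  induction c as [|c IH].
  - exact (DPR_comp1 _ (fun _ => 0%nat) _ DPR1_zero (DPR_nth0 k)).
  - exact (DPR_comp1 _ S _ DPR1_S IH).
Qed.

Create HintDb dpr.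
#[export] Hint Resolve DPR1_S : dpr.

(* Decomposes an explicit expression in the arguments [nth i xs 0] into
   compositions of functions already known to be DPR (hint database [dpr]). *)
Ltac dpr :=
  cbv beta;
  match goal with
  | |- DPR _ (fun _ => nth 0 _ _) => apply DPR_nth0
  | |- DPR _ (fun _ => nth 1 _ _) => apply DPR_nth1
  | |- DPR _ (fun _ => nth 2 _ _) => apply DPR_nth2
  | |- DPR _ (fun _ => nth 3 _ _) => apply DPR_nth3
  | |- DPR (S _) (fun _ => ?c) => apply DPR_const
  | |- DPR _ (fun xs => ?f (@?a xs) (@?b xs) (@?c xs) (@?d xs)) =>
      apply (DPR_comp4 _ f a b c d); [solve [auto with dpr] | dpr | dpr | dpr | dpr]
  | |- DPR _ (fun xs => ?f (@?a xs) (@?b xs) (@?c xs)) =>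
      apply (DPR_comp3 _ f a b c); [solve [auto with dpr] | dpr | dpr | dpr]
  | |- DPR _ (fun xs => ?f (@?a xs) (@?b xs)) =>
      apply (DPR_comp2 _ f a b); [solve [auto with dpr] | dpr | dpr]
  | |- DPR _ (fun xs => ?f (@?a xs)) =>
      apply (DPR_comp1 _ f a); [solve [auto with dpr] | dpr]
  | |- DPR1 _ => unfold DPR1; dpr
  | |- DPR2 _ => unfold DPR2; dpr
  | |- DPR3 _ => unfold DPR3; dpr
  | |- DPR4 _ => unfold DPR4; dpr
  end.

Fixpoint prec1 (f : nat -> nat) (g : nat -> nat -> nat -> nat) a y :=
  match y with O => f a | S y' => g a y' (prec1 f g a y') end.

Fixpoint prec2 (f : nat -> nat -> nat) (g : nat -> nat -> nat -> nat -> nat) a b y :=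
  match y with O => f a b | S y' => g a b y' (prec2 f g a b y') end.

Lemma DPR2_prec1 f g : DPR1 f -> DPR3 g -> DPR2 (prec1 f g).
Proof.
  intros Hf Hg. eapply DPR_ext; [|exact (DPR_rec 1 _ _ Hf Hg)].
  intros [|a [|y [|]]]; simpl; intros L; try discriminate.
  induction y as [|y IH]; simpl; congruence.
Qed.

Lemma DPR3_prec2 f g : DPR2 f -> DPR4 g -> DPR3 (prec2 f g).
Proof.
  intros Hf Hg. eapply DPR_ext; [|exact (DPR_rec 2 _ _ Hf Hg)].
  intros [|a [|b [|y [|]]]]; simpl; intros L; try discriminate.
  induction y as [|y IH]; simpl; congruence.
Qed.

Lemma DPR1_ext f g : (forall a, f a = g a) -> DPR1 f -> DPR1 g.
Proof. intros E. apply DPR_ext. auto. Qed.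

Lemma DPR2_ext f g : (forall a b, f a b = g a b) -> DPR2 f -> DPR2 g.
Proof. intros E. apply DPR_ext. auto. Qed.

Lemma DPR3_ext f g : (forall a b c, f a b c = g a b c) -> DPR3 f -> DPR3 g.
Proof. intros E. apply DPR_ext. auto. Qed.

Lemma DPR1_prec1 f g a : DPR1 f -> DPR3 g -> DPR1 (prec1 f g a).
Proof. intros Hf Hg. pose proof (DPR2_prec1 f g Hf Hg). dpr. Qed.

(** * Primitive recursive arithmetic *)

Local Open Scope nat_scope.

Lemma DPR1_id : DPR1 (fun x => x).
Proof. dpr. Qed.

Lemma DPR2_add : DPR2 Nat.add.
Proof.
  apply (DPR2_ext (prec1 (fun x => x) (fun _ _ p => S p))).
  - intros a b. induction b; simpl; lia.
  - apply DPR2_prec1; [apply DPR1_id|dpr].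
Qed.
#[export] Hint Resolve DPR2_add : dpr.

Lemma DPR1_pred : DPR1 pred.
Proof.
  apply (DPR1_ext (prec1 (fun _ => 0) (fun _ y _ => y) 0)); [|apply DPR1_prec1; dpr].
  now intros [|a].
Qed.
#[export] Hint Resolve DPR1_pred : dpr.

Lemma DPR2_sub : DPR2 Nat.sub.
Proof.
  apply (DPR2_ext (prec1 (fun x => x) (fun _ _ p => pred p))).
  - intros a b. induction b; simpl; lia.
  - apply DPR2_prec1; [apply DPR1_id|dpr].
Qed.
#[export] Hint Resolve DPR2_sub : dpr.

Lemma DPR2_mul : DPR2 Nat.mul.
Proof.
  apply (DPR2_ext (prec1 (fun _ => 0) (fun a _ p => p + a))).
  - intros a b. induction b; simpl; lia.
  - apply DPR2_prec1; dpr.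
Qed.
#[export] Hint Resolve DPR2_mul : dpr.

Definition ifz (c a b : nat) : nat := match c with O => a | S _ => b end.

Lemma DPR3_ifz : DPR3 ifz.
Proof.
  assert (H : DPR3 (prec2 (fun a _ => a) (fun _ b _ _ => b))) by (apply DPR3_prec2; dpr).
  eapply DPR_ext; [|exact (DPR_comp3 3 _ _ _ _ H (DPR_nth1 1) (DPR_nth2 0) (DPR_nth0 2))].
  intros [|c [|a [|b []]]]; try discriminate. now destruct c.
Qed.
#[export] Hint Resolve DPR3_ifz : dpr.

Definition eqb01 (a b : nat) : nat := Nat.b2n (a =? b).
Definition leb01 (a b : nat) : nat := Nat.b2n (a <=? b).

Lemma DPR2_eqb01 : DPR2 eqb01.
Proof.
  apply (DPR2_ext (fun a b => ifz ((a - b) + (b - a)) 1 0)); [|dpr].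
  intros a b. unfold eqb01. destruct (Nat.eqb_spec a b) as [<-|NE].
  - now rewrite Nat.sub_diag.
  - now destruct (a - b + (b - a)) eqn:E; [lia|].
Qed.
#[export] Hint Resolve DPR2_eqb01 : dpr.

Lemma DPR2_leb01 : DPR2 leb01.
Proof.
  apply (DPR2_ext (fun a b => ifz (a - b) 1 0)); [|dpr].
  intros a b. unfold leb01. destruct (Nat.leb_spec a b).
  - now replace (a - b) with 0 by lia.
  - now destruct (a - b) eqn:E; [lia|].
Qed.
#[export] Hint Resolve DPR2_leb01 : dpr.

Lemma DPR2_flip f : DPR2 f -> DPR2 (fun a b => f b a).
Proof. intros H. exact (DPR_comp2 2 f _ _ H (DPR_nth1 0) (DPR_nth0 1)). Qed.

Lemma succ_mod_div d n : 0 < d ->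
  S n mod d = ifz (eqb01 (S (n mod d)) d) (S (n mod d)) 0 /\
  S n / d = n / d + eqb01 (S (n mod d)) d.
Proof.
  intros Hd. pose proof (Nat.div_mod n d) as E. pose proof (Nat.mod_upper_bound n d) as B.
  unfold eqb01. destruct (Nat.eqb_spec (S (n mod d)) d) as [Eq|NE]; simpl.
  - split; symmetry; [apply (Nat.mod_unique _ _ (S (n / d)))|apply (Nat.div_unique _ _ _ 0)];
      lia.
  - split; symmetry;
      [apply (Nat.mod_unique _ _ (n / d))|apply (Nat.div_unique _ _ _ (S (n mod d)))];
      lia.
Qed.

Lemma DPR2_mod : DPR2 Nat.modulo.
Proof.
  apply (DPR2_flip (fun d n => n mod d)).
  apply (DPR2_ext (prec1 (fun _ => 0) (fun d _ r => ifz (eqb01 (S r) d) (S r) 0)));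
    [|apply DPR2_prec1; dpr].
  intros [|d] n; induction n as [|n IH]; simpl prec1.
  - reflexivity.
  - now rewrite IH, !Nat.mod_0_r.
  - now rewrite Nat.Div0.mod_0_l.
  - rewrite IH. symmetry. apply succ_mod_div. lia.
Qed.
#[export] Hint Resolve DPR2_mod : dpr.

Lemma DPR2_div : DPR2 Nat.div.
Proof.
  apply (DPR2_flip (fun d n => n / d)).
  apply (DPR2_ext (prec1 (fun _ => 0) (fun d n q => q + eqb01 (S (n mod d)) d)));
    [|apply DPR2_prec1; dpr].
  intros [|d] n; induction n as [|n IH]; simpl prec1.
  - reflexivity.
  - now rewrite IH, !Nat.div_0_r.
  - now rewrite Nat.Div0.div_0_l.
  - rewrite IH. symmetry. apply succ_mod_div. lia.
Qed.
#[export] Hint Resolve DPR2_div : dpr.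

Lemma mod_div_digit d c t : c < d -> (c + d * t) mod d = c /\ (c + d * t) / d = t.
Proof.
  intros Hc. split; symmetry; [apply (Nat.mod_unique _ _ t)|apply (Nat.div_unique _ _ _ c)]; lia.
Qed.

Fixpoint tri (s : nat) : nat := match s with O => 0 | S s' => tri s' + S s' end.

Lemma DPR1_tri : DPR1 tri.
Proof.
  apply (DPR1_ext (prec1 (fun _ => 0) (fun _ s p => p + S s) 0)); [|apply DPR1_prec1; dpr].
  intros n. induction n; cbn [prec1 tri]; congruence.
Qed.
#[export] Hint Resolve DPR1_tri : dpr.

Lemma tri_mono a b : a <= b -> tri a <= tri b.
Proof. induction 1; simpl; lia. Qed.

Definition cpair (a b : nat) : nat := tri (a + b) + b.

(* [diag n] is the index of the Cantor diagonal containing [n]. *)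
Fixpoint diag (n : nat) : nat :=
  match n with O => 0 | S n' => diag n' + eqb01 (S n') (tri (S (diag n'))) end.

Definition csnd (n : nat) : nat := n - tri (diag n).
Definition cfst (n : nat) : nat := diag n - csnd n.

Lemma DPR1_diag : DPR1 diag.
Proof.
  apply (DPR1_ext (prec1 (fun _ => 0) (fun _ n p => p + eqb01 (S n) (tri (S p))) 0));
    [|apply DPR1_prec1; dpr].
  intros n. induction n; cbn [prec1 diag]; congruence.
Qed.
#[export] Hint Resolve DPR1_diag : dpr.

Lemma DPR2_cpair : DPR2 cpair.
Proof. unfold cpair. dpr. Qed.
Lemma DPR1_cfst : DPR1 cfst.
Proof. unfold cfst, csnd. dpr. Qed.
Lemma DPR1_csnd : DPR1 csnd.
Proof. unfold csnd. dpr. Qed.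
#[export] Hint Resolve DPR2_cpair DPR1_cfst DPR1_csnd : dpr.

Lemma diag_spec n : tri (diag n) <= n < tri (S (diag n)).
Proof.
  induction n as [|n IH]; [simpl; lia|]. cbn [diag]. unfold eqb01.
  destruct (Nat.eqb_spec (S n) (tri (S (diag n)))) as [E|E]; cbn [Nat.b2n].
  - rewrite Nat.add_1_r.
    change (tri (S (S (diag n)))) with (tri (S (diag n)) + S (S (diag n))). lia.
  - rewrite Nat.add_0_r. lia.
Qed.

Lemma diag_unique n s : tri s <= n < tri (S s) -> diag n = s.
Proof.
  intros H. pose proof (diag_spec n).
  destruct (Nat.lt_trichotomy (diag n) s) as [L|[L|L]]; auto; apply tri_mono in L;
    simpl in *; lia.
Qed.

Lemma diag_cpair a b : diag (cpair a b) = a + b.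
Proof. apply diag_unique. unfold cpair. simpl. lia. Qed.

Lemma cfst_cpair a b : cfst (cpair a b) = a.
Proof. unfold cfst, csnd. rewrite diag_cpair. unfold cpair. lia. Qed.

Lemma csnd_cpair a b : csnd (cpair a b) = b.
Proof. unfold csnd. rewrite diag_cpair. unfold cpair. lia. Qed.

Lemma cpair_mono a b a' b' : a <= a' -> b <= b' -> cpair a b <= cpair a' b'.
Proof. intros. unfold cpair. pose proof (tri_mono (a + b) (a' + b')). lia. Qed.

(* The finite table [n |-> f n] for [n < N], extended by [0]. *)
Fixpoint tab (f : nat -> nat) (N n : nat) : nat :=
  match N with O => 0 | S N' => ifz (eqb01 n N') (tab f N' n) (f N') end.

Lemma DPR1_tab f N : DPR1 (tab f N).
Proof. induction N; simpl; dpr. Qed.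
#[export] Hint Resolve DPR1_tab : dpr.

Lemma tab_spec f N n : n < N -> tab f N n = f n.
Proof.
  induction N as [|N IH]; simpl; intros H; [lia|]. unfold eqb01.
  destruct (Nat.eqb_spec n N) as [<-|NE]; [reflexivity|]. apply IH. lia.
Qed.

(* [rescale y (2 ^ length (nbar y))] doubles its last argument exactly when
   [nbar (S y)] is one bit longer than [nbar y], i.e. when [S (S y)] is a power of 2. *)
Definition rescale (y p r : nat) : nat := ifz (eqb01 (S (S y)) (p + p)) r (r + r).

Lemma DPR3_rescale : DPR3 rescale.
Proof. unfold rescale. dpr. Qed.
#[export] Hint Resolve DPR3_rescale : dpr.

Fixpoint pow2_len (y : nat) : nat :=
  match y with O => 1 | S y' => rescale y' (pow2_len y') (pow2_len y') end.

Lemma DPR1_pow2_len : DPR1 pow2_len.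
Proof.
  apply (DPR1_ext (prec1 (fun _ => 1) (fun _ y p => rescale y p p) 0)); [|apply DPR1_prec1; dpr].
  intros y. induction y; cbn [prec1 pow2_len]; congruence.
Qed.
#[export] Hint Resolve DPR1_pow2_len : dpr.

Lemma pos_bits_bound p : 2 ^ length (pos_bits p) <= Pos.to_nat p < 2 ^ S (length (pos_bits p)).
Proof.
  induction p; cbn [pos_bits]; rewrite ?length_app; simpl length;
    rewrite ?Pos2Nat.inj_xI, ?Pos2Nat.inj_xO, ?Pos2Nat.inj_1, ?Nat.add_1_r; simpl in *; lia.
Qed.

Lemma length_nbar_log2 y : length (nbar y) = Nat.log2 (S y).
Proof.
  symmetry. apply Nat.log2_unique; [lia|]. unfold nbar.
  pose proof (pos_bits_bound (Pos.of_succ_nat y)). now rewrite SuccNat2Pos.id_succ in H.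
Qed.

Lemma length_nbar y : length (nbar y) <= y.
Proof. rewrite length_nbar_log2. pose proof (Nat.log2_lt_lin (S y)). lia. Qed.

Lemma pow2_len_spec y : pow2_len y = 2 ^ length (nbar y).
Proof.
  induction y as [|y IH]; [reflexivity|]. cbn [pow2_len]. rewrite IH, !length_nbar_log2.
  pose proof (Nat.log2_spec (S y) ltac:(lia)) as [L U].
  set (k := Nat.log2 (S y)) in *. unfold rescale, eqb01.
  destruct (Nat.eqb_spec (S (S y)) (2 ^ k + 2 ^ k)) as [E|E]; cbn [Nat.b2n ifz].
  - rewrite (Nat.log2_unique (S (S y)) (S k)); [|lia|simpl in *; lia]. simpl. lia.
  - rewrite (Nat.log2_unique (S (S y)) k); [reflexivity|lia|simpl in *; lia].
Qed.

Lemma pow2_len_pos y : 0 < pow2_len y.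
Proof. rewrite pow2_len_spec. apply Nat.neq_0_lt_0, Nat.pow_nonzero. lia. Qed.

(* Remainders of the long division of [a] by [b] in base 2. *)
Fixpoint bin_rem (a b j : nat) : nat :=
  match j with
  | O => a
  | S j' => let d := bin_rem a b j' + bin_rem a b j' in ifz (leb01 b d) d (d - b)
  end.

(* The [S j]-th binary digit of [a / b] after the point, for [a < b]. *)
Definition bin_digit (a b j : nat) : nat := leb01 b (bin_rem a b j + bin_rem a b j).

Lemma DPR3_bin_digit : DPR3 bin_digit.
Proof.
  assert (DPR3 bin_rem).
  { apply (DPR3_ext (prec2 (fun a _ => a)
             (fun _ b _ r => ifz (leb01 b (r + r)) (r + r) (r + r - b)))).
    - intros a b j. induction j; cbn [prec2 bin_rem]; congruence.
    - apply DPR3_prec2; dpr. }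
  unfold bin_digit. dpr.
Qed.
#[export] Hint Resolve DPR3_bin_digit : dpr.

Definition iterate (f : nat -> nat) (s n : nat) : nat := Nat.iter n f s.

Lemma DPR2_iterate f : DPR1 f -> DPR2 (iterate f).
Proof.
  intros Hf. apply (DPR2_ext (prec1 (fun s => s) (fun _ _ p => f p))).
  - intros s n. induction n; simpl; congruence.
  - apply DPR2_prec1; [apply DPR1_id|dpr].
Qed.
#[export] Hint Resolve DPR2_iterate : dpr.

Lemma iter_fixpoint (g : nat -> nat) s n : g s = s -> Nat.iter n g s = s.
Proof. intros H. induction n; simpl; congruence. Qed.

(* The word [l], read as digits [dig b] in base [B], least significant first. *)
Definition word_code (B : nat) (dig : nat -> nat) (l : list bool) (acc : nat) : nat :=
  fold_right (fun b a => dig (Nat.b2n b) + B * a) acc l.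

(* One step of peeling the binary expansion of [p] from the least significant
   end, on states [cpair p acc]; [p = 1] is the leading bit and is stable. *)
Definition peel_bit (B : nat) (dig : nat -> nat) (st : nat) : nat :=
  ifz (cfst st - 1) st (cpair (cfst st / 2) (dig (cfst st mod 2) + B * csnd st)).

Lemma DPR1_peel_bit B dig : DPR1 dig -> DPR1 (peel_bit B dig).
Proof. intros. unfold peel_bit. dpr. Qed.
#[export] Hint Resolve DPR1_peel_bit : dpr.

Lemma iter_peel_bit B dig p : forall acc n, Pos.to_nat p <= S n ->
  Nat.iter n (peel_bit B dig) (cpair (Pos.to_nat p) acc) =
  cpair 1 (word_code B dig (pos_bits p) acc).
Proof.
  unfold word_code.
  induction p as [p IH|p IH|]; intros acc n Hn; cbn [pos_bits]; rewrite ?fold_right_app.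
  - rewrite Pos2Nat.inj_xI in *. destruct n as [|n]; [lia|]. rewrite Nat.iter_succ_r.
    unfold peel_bit at 2. rewrite cfst_cpair, csnd_cpair.
    change (S (2 * Pos.to_nat p)) with (1 + 2 * Pos.to_nat p).
    destruct (mod_div_digit 2 1 (Pos.to_nat p)) as [E1 E2]; [lia|].
    rewrite E1, E2. replace (1 + 2 * Pos.to_nat p - 1) with (S (2 * Pos.to_nat p - 1)) by lia.
    apply IH. lia.
  - rewrite Pos2Nat.inj_xO in *. pose proof (Pos2Nat.is_pos p).
    destruct n as [|n]; [lia|]. rewrite Nat.iter_succ_r.
    unfold peel_bit at 2. rewrite cfst_cpair, csnd_cpair.
    destruct (mod_div_digit 2 0 (Pos.to_nat p)) as [E1 E2]; [lia|].
    rewrite Nat.add_0_l in E1, E2. rewrite E1, E2.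
    replace (2 * Pos.to_nat p - 1) with (S (2 * Pos.to_nat p - 2)) by lia.
    apply IH. lia.
  - apply iter_fixpoint. unfold peel_bit. now rewrite cfst_cpair.
Qed.

Definition nbar_code (B : nat) (dig : nat -> nat) (x : nat) : nat :=
  csnd (iterate (peel_bit B dig) (cpair (S x) 0) x).

Lemma nbar_code_spec B dig x : nbar_code B dig x = word_code B dig (nbar x) 0.
Proof.
  unfold nbar_code, iterate, nbar. rewrite <- (SuccNat2Pos.id_succ x) at 1.
  rewrite iter_peel_bit, csnd_cpair; [reflexivity|]. rewrite SuccNat2Pos.id_succ. lia.
Qed.

Lemma DPR1_nbar_code B dig : DPR1 dig -> DPR1 (nbar_code B dig).
Proof. intros. unfold nbar_code. dpr. Qed.
#[export] Hint Resolve DPR1_nbar_code : dpr.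

(** * Arithmetization of a probabilistic Turing machine *)

Section Arithmetization.

Variable M : PTM.

Let symbols : list (Gam M) := proj1_sig (constructive_indefinite_description _ (Gam_finite M)).
Let states : list (Q M) := proj1_sig (constructive_indefinite_description _ (Q_finite M)).

Lemma symbols_complete a : In a symbols.
Proof. exact (proj2_sig (constructive_indefinite_description _ (Gam_finite M)) a). Qed.

Lemma states_complete q : In q states.
Proof. exact (proj2_sig (constructive_indefinite_description _ (Q_finite M)) q). Qed.

Definition sym_code (a : Gam M) : nat :=
  proj1_sig (constructive_indefinite_description _
    (In_nth symbols a (blank M) (symbols_complete a))).
Definition state_code (q : Q M) : nat :=
  proj1_sig (constructive_indefinite_description _
    (In_nth states q (qstart M) (states_complete q))).
Definition sym_of (n : nat) : Gam M := nth n symbols (blank M).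
Definition state_of (n : nat) : Q M := nth n states (qstart M).

Lemma sym_code_spec a : sym_code a < length symbols /\ sym_of (sym_code a) = a.
Proof. unfold sym_code, sym_of. apply proj2_sig. Qed.

Lemma state_code_spec q : state_code q < length states /\ state_of (state_code q) = q.
Proof. unfold state_code, state_of. apply proj2_sig. Qed.

Lemma sym_code_lt a : sym_code a < length symbols.
Proof. apply sym_code_spec. Qed.

Lemma sym_of_code a : sym_of (sym_code a) = a.
Proof. apply sym_code_spec. Qed.

Lemma state_code_lt q : state_code q < length states.
Proof. apply state_code_spec. Qed.

Lemma state_of_code q : state_of (state_code q) = q.
Proof. apply state_code_spec. Qed.

(* Tape halves are written in base [W], digit [0] marking the end of the word. *)
Let W : nat := S (length symbols).

Definition push (a l : nat) : nat := S a + W * l.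
Definition tail_code (l : nat) : nat := l / W.
Definition head_code (l : nat) : nat := ifz l (sym_code (blank M)) (pred (l mod W)).

Fixpoint tape_code (l : list (Gam M)) : nat :=
  match l with [] => 0 | a :: s => push (sym_code a) (tape_code s) end.

Lemma tail_tape_code l : tail_code (tape_code l) = tape_code (tl l).
Proof.
  destruct l as [|a s]; [reflexivity|]. unfold tail_code. cbn [tape_code tl]. unfold push.
  apply mod_div_digit. pose proof (sym_code_lt a). unfold W. lia.
Qed.

Lemma head_tape_code l : head_code (tape_code l) = sym_code (hd (blank M) l).
Proof.
  destruct l as [|a s]; [reflexivity|]. unfold head_code. cbn [tape_code hd]. unfold push.
  assert (Ha : S (sym_code a) < W) by (pose proof (sym_code_lt a); unfold W; lia).
  now rewrite (proj1 (mod_div_digit _ _ (tape_code s) Ha)).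
Qed.

Definition conf_code (l r a q : nat) : nat := cpair l (cpair r (cpair a q)).
Definition left_part (n : nat) : nat := cfst n.
Definition right_part (n : nat) : nat := cfst (csnd n).
Definition cur_part (n : nat) : nat := cfst (csnd (csnd n)).
Definition state_part (n : nat) : nat := csnd (csnd (csnd n)).

Definition enc (C : Conf M) : nat :=
  conf_code (tape_code (cleft C)) (tape_code (cright C)) (sym_code (ccur C))
    (state_code (cstate C)).

Definition dir_code (d : Dir) : nat := match d with DLeft => 0 | DStay => 1 | DRight => 2 end.
Definition bit_of (n : nat) : bool := negb (n =? 0).

Definition trans_code (i : bool) (q : Q M) (a : Gam M) : nat :=
  let '(q', a', d) := delta M i q a in cpair (state_code q') (cpair (sym_code a') (dir_code d)).

(* [delta] as a finite table indexed by [cpair i (cpair q a)]. *)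
Definition trans_table : nat -> nat :=
  tab (fun key => trans_code (bit_of (cfst key)) (state_of (cfst (csnd key)))
                    (sym_of (csnd (csnd key))))
      (S (cpair 1 (cpair (length states) (length symbols)))).

Lemma trans_table_spec i q a :
  trans_table (cpair (Nat.b2n i) (cpair (state_code q) (sym_code a))) = trans_code i q a.
Proof.
  unfold trans_table. rewrite tab_spec.
  - repeat rewrite ?cfst_cpair, ?csnd_cpair. rewrite state_of_code, sym_of_code. now destruct i.
  - pose proof (state_code_lt q). pose proof (sym_code_lt a).
    apply Nat.lt_succ_r, cpair_mono; [destruct i; simpl; lia|].
    apply cpair_mono; lia.
Qed.

(* [t] codes [(q', a', d)] as in [trans_code]; the branches implement [step]
   for [d = DLeft], [DStay], [DRight]. *)
Definition move_code (t n : nat) : nat :=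
  ifz (csnd (csnd t))
    (conf_code (tail_code (left_part n)) (push (cfst (csnd t)) (right_part n))
       (head_code (left_part n)) (cfst t))
    (ifz (pred (csnd (csnd t)))
       (conf_code (left_part n) (right_part n) (cfst (csnd t)) (cfst t))
       (conf_code (push (cfst (csnd t)) (left_part n)) (tail_code (right_part n))
          (head_code (right_part n)) (cfst t))).

Definition step_code (n i : nat) : nat :=
  move_code (trans_table (cpair i (cpair (state_part n) (cur_part n)))) n.

Lemma DPR2_step_code : DPR2 step_code.
Proof.
  assert (DPR2 move_code).
  { unfold move_code, conf_code, push, tail_code, head_code, left_part, right_part. dpr. }
  unfold step_code, trans_table, state_part, cur_part. dpr.
Qed.

Lemma step_tl_hd i C : step M i C =
  let '(q', a', d) := delta M i (cstate C) (ccur C) in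
  match d with
  | DLeft => mkConf (tl (cleft C)) (hd (blank M) (cleft C)) (a' :: cright C) q'
  | DStay => mkConf (cleft C) a' (cright C) q'
  | DRight => mkConf (a' :: cleft C) (hd (blank M) (cright C)) (tl (cright C)) q'
  end.
Proof.
  unfold step. destruct (delta M i (cstate C) (ccur C)) as [[q' a'] []];
    [destruct (cleft C)| |destruct (cright C)]; reflexivity.
Qed.

Lemma step_code_spec C i : step_code (enc C) (Nat.b2n i) = enc (step M i C).
Proof.
  destruct C as [l a r q].
  unfold step_code, enc, conf_code, state_part, cur_part. simpl.
  repeat rewrite ?cfst_cpair, ?csnd_cpair.
  rewrite trans_table_spec, step_tl_hd. unfold trans_code. simpl.
  destruct (delta M i q a) as [[q' a'] []];
    unfold move_code, left_part, right_part, conf_code;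
    repeat rewrite ?cfst_cpair, ?csnd_cpair; simpl;
    rewrite ?tail_tape_code, ?head_tape_code; reflexivity.
Qed.

Definition input_digit (b : nat) : nat :=
  S (ifz b (sym_code (sym0 M)) (sym_code (sym1 M))).

Lemma DPR1_input_digit : DPR1 input_digit.
Proof. unfold input_digit. dpr. Qed.
#[local] Hint Resolve DPR1_input_digit : dpr.

Lemma input_tape_code x :
  nbar_code W input_digit x =
  tape_code (map (fun b : bool => if b then sym1 M else sym0 M) (nbar x)).
Proof.
  rewrite nbar_code_spec. unfold word_code.
  induction (nbar x) as [|b l IH]; cbn [fold_right map tape_code]; [reflexivity|].
  rewrite IH. unfold push, input_digit. now destruct b.
Qed.

Definition init_code (x : nat) : nat :=
  conf_code 0 (tail_code (nbar_code W input_digit x)) (head_code (nbar_code W input_digit x))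
    (state_code (qstart M)).

Lemma DPR1_init_code : DPR1 init_code.
Proof. unfold init_code, conf_code, tail_code, head_code. dpr. Qed.

Lemma init_code_spec x : init_code x = enc (init M x).
Proof.
  unfold init_code, init. rewrite input_tape_code, tail_tape_code, head_tape_code.
  now destruct (map _ (nbar x)).
Qed.

Definition final_code (n : nat) : nat :=
  ifz (right_part n)
    (tab (fun q => Nat.b2n (qfinal M (state_of q))) (length states) (state_part n)) 0.

Lemma DPR1_final_code : DPR1 final_code.
Proof. unfold final_code, right_part, state_part. dpr. Qed.

Lemma final_code_spec C : final_code (enc C) = Nat.b2n (is_final M C).
Proof.
  destruct C as [l a r q]. unfold final_code, enc, conf_code, right_part, state_part, is_final.
  cbn [cleft ccur cright cstate]. repeat rewrite ?cfst_cpair, ?csnd_cpair.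
  rewrite tab_spec by apply state_code_lt. rewrite state_of_code. now destruct r.
Qed.

(* Partial configurations: [0] codes [None], [S (enc C)] codes [Some C]. *)
Definition opt_code (o : option (Conf M)) : nat :=
  match o with None => 0 | Some C => S (enc C) end.

Definition child_code (o i : nat) : nat :=
  ifz o 0 (ifz (final_code (pred o)) (S (step_code (pred o) i)) 0).

Definition child (o : option (Conf M)) (b : bool) : option (Conf M) :=
  match o with None => None | Some C => if is_final M C then None else Some (step M b C) end.

Lemma child_code_spec o b : child_code (opt_code o) (Nat.b2n b) = opt_code (child o b).
Proof.
  destruct o as [C|]; [|reflexivity]. unfold child_code, child. cbn [opt_code ifz pred].
  rewrite final_code_spec. destruct (is_final M C); [reflexivity|].
  cbn [ifz Nat.b2n]. now rewrite step_code_spec.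
Qed.

(* Walks down the computation tree on states [cpair node path], the path
   being a [word_code 3 S] with digit [1] for bit [0] and [2] for bit [1]. *)
Definition descend (st : nat) : nat :=
  ifz (csnd st) st (cpair (child_code (cfst st) (pred (csnd st mod 3))) (csnd st / 3)).

Lemma DPR1_descend : DPR1 descend.
Proof.
  assert (DPR2 child_code).
  { pose proof DPR2_step_code. pose proof DPR1_final_code. unfold child_code. dpr. }
  unfold descend. dpr.
Qed.

Definition follow_opt (o : option (Conf M)) (l : list bool) : option (Conf M) :=
  match o with None => None | Some C => follow M C l end.

Lemma iter_descend l : forall o n, length l <= n ->
  Nat.iter n descend (cpair (opt_code o) (word_code 3 S l 0)) =
  cpair (opt_code (follow_opt o l)) 0.
Proof.
  induction l as [|b l IH]; intros o n Hn.
  - replace (follow_opt o []) with o by now destruct o.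
    apply iter_fixpoint. unfold descend. now rewrite csnd_cpair.
  - destruct n as [|n]; [simpl in Hn; lia|]. rewrite Nat.iter_succ_r.
    unfold descend at 2. rewrite cfst_cpair, csnd_cpair.
    change (word_code 3 S (b :: l) 0) with (S (Nat.b2n b) + 3 * word_code 3 S l 0).
    destruct (mod_div_digit 3 (S (Nat.b2n b)) (word_code 3 S l 0)) as [E1 E2];
      [destruct b; simpl; lia|].
    rewrite E1, E2, Nat.add_succ_l. cbn [ifz pred].
    rewrite child_code_spec, IH by (simpl in Hn; lia).
    destruct o as [C|]; [|reflexivity]. simpl. now destruct (is_final M C).
Qed.

Definition node_code (x y : nat) : nat :=
  cfst (iterate descend (cpair (S (init_code x)) (nbar_code 3 S y)) y).

Lemma node_code_spec x y : node_code x y = opt_code (follow M (init M x) (nbar y)).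
Proof.
  unfold node_code, iterate. rewrite nbar_code_spec, init_code_spec.
  change (S (enc (init M x))) with (opt_code (Some (init M x))).
  now rewrite iter_descend, cfst_cpair by apply length_nbar.
Qed.

Definition leaf_code (x y : nat) : nat :=
  ifz (node_code x y) 0 (final_code (pred (node_code x y))).

Lemma DPR2_leaf_code : DPR2 leaf_code.
Proof.
  pose proof DPR1_init_code. pose proof DPR1_descend. pose proof DPR1_final_code.
  unfold leaf_code, node_code. dpr.
Qed.

Lemma leaf_code_spec x y : leaf_code x y = Nat.b2n (is_leaf M x y).
Proof.
  unfold leaf_code, is_leaf. rewrite node_code_spec.
  destruct (follow M (init M x) (nbar y)) as [C|]; [|reflexivity].
  apply final_code_spec.
Qed.

#[local] Hint Resolve DPR2_leaf_code : dpr.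

(* [prodPT1 M x y = numer x y / 2 ^ length (nbar y)]. *)
Fixpoint numer (x y : nat) : nat :=
  match y with
  | O => 1
  | S y' => rescale y' (pow2_len y') (numer x y' - leaf_code x y')
  end.

Lemma DPR2_numer : DPR2 numer.
Proof.
  apply (DPR2_ext
    (prec1 (fun _ => 1) (fun x y r => rescale y (pow2_len y) (r - leaf_code x y)))).
  - intros x y. induction y; cbn [prec1 numer]; congruence.
  - apply DPR2_prec1; dpr.
Qed.
#[local] Hint Resolve DPR2_numer : dpr.

(* The binary digits of [PT^1_M(x,y)]: all ones unless [y] is a leaf with
   [numer x y > 0], where [PT^1_M(x,y) = (numer x y - 1) / numer x y]. *)
Definition pt1_digit (x y i : nat) : nat :=
  ifz (leaf_code x y * numer x y) 1 (bin_digit (numer x y - 1) (numer x y) i).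

Lemma DPR3_pt1_digit : DPR3 pt1_digit.
Proof. unfold pt1_digit. dpr. Qed.

End Arithmetization.

(** * The probabilities as binary expansions *)

Local Open Scope R_scope.

Lemma INR_pow2_len_pos y : 0 < INR (pow2_len y).
Proof. apply lt_0_INR, pow2_len_pos. Qed.

Lemma PT_pow2_len M x y : PT M x y = / INR (pow2_len y).
Proof. unfold PT. now rewrite pow2_len_spec, pow_INR, pow_inv. Qed.

Lemma INR_rescale_ratio y p a b : (0 < b)%nat ->
  INR (rescale y p a) / INR (rescale y p b) = INR a / INR b.
Proof.
  intros Hb. unfold rescale. destruct (eqb01 _ _); [reflexivity|].
  assert (0 < INR b) by now apply lt_0_INR. cbn [ifz]. rewrite !plus_INR. field. lra.
Qed.

Lemma prodPT1_numer M x y : prodPT1 M x y = INR (numer M x y) / INR (pow2_len y).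
Proof.
  induction y as [|y IH]; [simpl; field|].
  cbn [prodPT1 numer pow2_len]. rewrite INR_rescale_ratio by apply pow2_len_pos.
  rewrite leaf_code_spec, IH. pose proof (INR_pow2_len_pos y).
  destruct (is_leaf M x y); cbn [Nat.b2n].
  - rewrite PT_pow2_len. destruct (numer M x y) as [|b].
    + simpl. unfold Rdiv. ring.
    + rewrite Nat.sub_1_r, S_INR. simpl pred. pose proof (pos_INR b). field. lra.
  - rewrite Nat.sub_0_r. ring.
Qed.

Lemma PT1_numer M x y : is_leaf M x y = true -> (1 <= numer M x y)%nat ->
  PT1 M x y = INR (numer M x y - 1) / INR (numer M x y).
Proof.
  intros HL HB. unfold PT1, PT0. rewrite HL, PT_pow2_len, prodPT1_numer, minus_INR by auto.
  pose proof (INR_pow2_len_pos y). apply le_INR in HB. simpl INR in *. field. lra.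
Qed.

(* With [numer = 0] the quotient [PT / prodPT1] is a division by [0], hence [0]. *)
Lemma PT1_eq_1 M x y : is_leaf M x y = false \/ numer M x y = 0%nat -> PT1 M x y = 1.
Proof.
  unfold PT1, PT0. intros [H|H]; [now rewrite H|].
  destruct (is_leaf M x y); [|reflexivity].
  rewrite prodPT1_numer, H. unfold Rdiv. rewrite Rmult_0_l, Rinv_0. ring.
Qed.

Lemma PT0_PT1 M x y : PT0 M x y = 1 - PT1 M x y.
Proof. unfold PT1, PT0. destruct (is_leaf M x y); ring. Qed.

Lemma pt1_digit_leaf M x y i b : is_leaf M x y = true -> numer M x y = S b ->
  pt1_digit M x y i = bin_digit b (S b) i.
Proof.
  intros HL HB. unfold pt1_digit. rewrite leaf_code_spec, HL, HB. cbn [Nat.b2n].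
  now rewrite Nat.mul_1_l, Nat.sub_1_r.
Qed.

Lemma pt1_digit_one M x y i : is_leaf M x y = false \/ numer M x y = 0%nat ->
  pt1_digit M x y i = 1%nat.
Proof.
  intros H. unfold pt1_digit. rewrite leaf_code_spec.
  destruct H as [H|H]; rewrite H; [reflexivity|]. now rewrite Nat.mul_0_r.
Qed.

Lemma bin_digit_expansion a b n : (0 < b)%nat -> (a < b)%nat ->
  INR a / INR b = fsum n (fun i => INR (bin_digit a b i) * (/ 2) ^ S i)
                  + INR (bin_rem a b n) / INR b * (/ 2) ^ n /\ (bin_rem a b n < b)%nat.
Proof.
  intros Hb Ha. assert (0 < INR b) by now apply lt_0_INR.
  induction n as [|n [E Hr]]; [simpl; split; [field; lra|auto]|].
  cbn [fsum bin_rem]. set (r := bin_rem a b n) in *.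
  change (bin_digit a b n) with (leb01 b (r + r)). unfold leb01.
  destruct (Nat.leb_spec b (r + r)); cbn [Nat.b2n ifz]; (split; [|lia]); rewrite E.
  - rewrite minus_INR, plus_INR by lia. simpl pow. simpl INR. field. lra.
  - rewrite plus_INR. simpl pow. simpl INR. field. lra.
Qed.

Lemma Un_cv_pow_half_bound (u : nat -> R) l :
  (forall n, Rabs (u n - l) <= (/ 2) ^ n) -> Un_cv u l.
Proof.
  intros H eps He. destruct (cv_pow_half 1 eps He) as [N HN]. exists N. intros n Hn.
  specialize (HN n Hn). unfold Rdist in *. rewrite Rminus_0_r, Rabs_pos_eq in HN.
  - specialize (H n). rewrite pow_inv in H. lra.
  - unfold Rdiv. rewrite Rmult_1_l. left. apply Rinv_0_lt_compat, pow_lt. lra.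
Qed.

Lemma fsum_pow_half n : fsum n (fun i => (/ 2) ^ S i) = 1 - (/ 2) ^ n.
Proof. induction n; cbn [fsum]; [simpl; ring|]. rewrite IHn. simpl pow. field. Qed.

Lemma pow_half_series : Un_cv (fun K => fsum K (fun i => (/ 2) ^ S i)) 1.
Proof.
  apply Un_cv_pow_half_bound. intros n. rewrite fsum_pow_half.
  replace (1 - (/ 2) ^ n - 1) with (- (/ 2) ^ n) by ring.
  rewrite Rabs_Ropp, Rabs_pos_eq; [lra|]. apply pow_le. lra.
Qed.

Lemma bin_digit_series a b : (a < b)%nat ->
  Un_cv (fun K => fsum K (fun i => INR (bin_digit a b i) * (/ 2) ^ S i)) (INR a / INR b).
Proof.
  intros Hab. apply Un_cv_pow_half_bound. intros n.
  destruct (bin_digit_expansion a b n) as [E Hr]; try lia. rewrite E.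
  set (s := fsum _ _). set (r := bin_rem a b n) in *.
  replace (s - (s + INR r / INR b * (/ 2) ^ n)) with (- (INR r / INR b * (/ 2) ^ n)) by ring.
  assert (0 < INR b) by (apply lt_0_INR; lia). apply lt_INR in Hr. pose proof (pos_INR r).
  assert (0 < (/ 2) ^ n) by (apply pow_lt; lra).
  assert (0 <= INR r / INR b <= 1) as [L U].
  { unfold Rdiv. split; [apply Rmult_le_pos; [lra|left; now apply Rinv_0_lt_compat]|].
    apply (Rmult_le_reg_r (INR b)); auto. rewrite Rmult_assoc, Rinv_l; lra. }
  rewrite Rabs_Ropp, Rabs_pos_eq; nra.
Qed.

Lemma PT1_binary_series M x y :
  Un_cv (fun K => fsum K (fun i => INR (pt1_digit M x y i) * (/ 2) ^ S i)) (PT1 M x y).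
Proof.
  destruct (is_leaf M x y) eqn:HL; [destruct (numer M x y) as [|b] eqn:HB|].
  2: { rewrite PT1_numer, HB, Nat.sub_1_r by (auto; lia).
       apply (Un_cv_eventually_eq _ _ _ 0 (bin_digit_series b (S b) ltac:(lia))).
       intros n _. apply fsum_ext. intros i _. now rewrite (pt1_digit_leaf M x y i b). }
  all: rewrite PT1_eq_1 by auto; apply (Un_cv_eventually_eq _ _ _ 0 pow_half_series);
    intros n _; apply fsum_ext; intros i _; rewrite pt1_digit_one by auto; apply Rmult_1_l.
Qed.

(** * The geometric distribution *)

Definition geom_weight (i : nat) : R := / 2 * fprod i (fun _ => / 2).

Lemma geom_weight_pow i : geom_weight i = (/ 2) ^ S i.
Proof. unfold geom_weight. induction i; simpl in *; [ring|]. rewrite <- IHi. ring. Qed.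

Definition fair_coin : PF := fun _ w =>
  if Nat.eqb w 0 then / 2 else if Nat.eqb w 1 then / 2 else 0.

Definition rand : PF := fun l w =>
  if Nat.eqb w (nth 0 l 0%nat) then / 2 else if Nat.eqb w (S (nth 0 l 0%nat)) then / 2 else 0.

Lemma PR_fair_coin : PR 3 fair_coin.
Proof.
  destruct (DPR_const 2 0) as [g0 [Hg0 Hv0]].
  apply (PR_comp 3 1 rand [g0]); auto.
  - now apply PR_rand.
  - now intros g [<-|[]].
  - intros xs w Lx. apply (Un_cv_stationary _ _ 1). intros K HK.
    rewrite (box_single 1 K _ [0%nat]); auto.
    + cbn [forallb prodg]. rewrite (proj2 (Nat.ltb_lt 0 K)), Hv0, dirac_eq by (auto || lia).
      rewrite !Rmult_1_r. reflexivity.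
    + intros [|z [|]] Hz Hne; try discriminate. simpl.
      rewrite Hv0, dirac_neq by (auto; congruence). ring.
Qed.

(* [geom_weight] is the minimization of a fair coin: the first [0] among
   independent fair bits occurs at position [i] with probability [2^-(i+1)]. *)
Lemma PR_geom_weight : PR 2 (fun _ => geom_weight).
Proof.
  apply (PR_min 2 fair_coin); [exact PR_fair_coin|]. intros xs _.
  exists (fun _ => / 2). split; [|reflexivity].
  intros z. change (/ 2) with (fair_coin (xs ++ [z]) 1%nat).
  apply (infinite_sum_single (fun j => fair_coin (xs ++ [z]) (S j))).
  intros [|[|i]] Hi; [lia|reflexivity|reflexivity].
Qed.

Lemma dirac_bit d w : (d = 0 \/ d = 1)%nat ->
  dirac d w = match w with O => 1 - INR d | 1%nat => INR d | _ => 0 end.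
Proof. intros [-> | ->]; destruct w as [|[|w]]; unfold dirac; simpl; ring. Qed.

Lemma PR2_geometric_mixture (G : nat -> nat -> nat -> nat) (h : PF) : DPR3 G ->
  (forall x y w,
     Un_cv (fun K => fsum K (fun i => dirac (G x y i) w * geom_weight i)) (h [x; y] w)) ->
  PR 2 h.
Proof.
  intros [g [Hg Hgv]] Hcv.
  apply (PR_comp 2 3 g [fun xs => dirac (nth 0 xs 0%nat); fun xs => dirac (nth 1 xs 0%nat);
                         fun _ => geom_weight]); auto.
  - intros f [<-|[<-|[<-|[]]]].
    + apply (PR_proj 2 1); [lia|reflexivity].
    + apply (PR_proj 2 2); [lia|reflexivity].
    + exact PR_geom_weight.
  - intros xs w Lx. destruct xs as [|x [|y [|]]]; try discriminate.
    apply (Un_cv_eventually_eq _ _ _ (S (x + y)) (Hcv x y w)). intros K HK.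
    cbn [box]. rewrite (fsum_single K _ x).
    2: { intros i Hi. do 2 (apply fsum_zero; intros). simpl. rewrite dirac_neq by auto. ring. }
    rewrite (proj2 (Nat.ltb_lt x K)) by lia. rewrite (fsum_single K _ y).
    2: { intros i Hi. apply fsum_zero. intros. simpl. rewrite (dirac_neq y i) by auto. ring. }
    rewrite (proj2 (Nat.ltb_lt y K)) by lia.
    apply fsum_ext. intros i _. simpl. rewrite !dirac_eq, Hgv by reflexivity. simpl. ring.
Qed.

Lemma pt1_digit_bit M x y i : (pt1_digit M x y i = 0 \/ pt1_digit M x y i = 1)%nat.
Proof.
  unfold pt1_digit, bin_digit, leb01. destruct (leaf_code M x y * numer M x y)%nat; [now right|].
  cbn [ifz]. destruct (Nat.leb _ _); auto.
Qed.

Lemma PTC_geometric_series M x y w :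
  Un_cv (fun K => fsum K (fun i => dirac (pt1_digit M x y i) w * geom_weight i)) (PTC M x y w).
Proof.
  assert (E : forall i, dirac (pt1_digit M x y i) w * geom_weight i =
    match w with
    | O => (/ 2) ^ S i - INR (pt1_digit M x y i) * (/ 2) ^ S i
    | 1%nat => INR (pt1_digit M x y i) * (/ 2) ^ S i
    | _ => 0 end).
  { intros i. rewrite dirac_bit, geom_weight_pow by apply pt1_digit_bit.
    destruct w as [|[|]]; ring. }
  apply (Un_cv_eventually_eq (fun K => match w with
      | O => fsum K (fun i => (/ 2) ^ S i)
             - fsum K (fun i => INR (pt1_digit M x y i) * (/ 2) ^ S i)
      | 1%nat => fsum K (fun i => INR (pt1_digit M x y i) * (/ 2) ^ S i)
      | _ => 0 end) _ _ 0%nat).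
  - unfold PTC. destruct w as [|[|]].
    + rewrite PT0_PT1. apply CV_minus; [apply pow_half_series|apply PT1_binary_series].
    + apply PT1_binary_series.
    + apply (Un_cv_stationary _ _ 0). reflexivity.
  - intros K _. induction K as [|K IH]; cbn [fsum]; rewrite ?IH, ?E; destruct w as [|[|]]; ring.
Qed.

Theorem mainTheorem10 (M : PTM) :
  exists h : PF, PR 2 h /\ (forall x y z, h [x; y] z = PTC M x y z).
Proof.
  exists (fun xs => PTC M (nth 0 xs 0%nat) (nth 1 xs 0%nat)). split; [|reflexivity].
  apply (PR2_geometric_mixture (pt1_digit M)).
  - apply DPR3_pt1_digit.
  - apply PTC_geometric_series.
Qed.
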